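(* Let $k$ and $r$ be positive integers such that $r \mid k$ and $k > r$. Then $$S_{\mathfrak{z},2}(k;r) = rk - 2r + 1.$$
   Context: Let $\mathcal{E}$ denote the equation $x_1 + x_2 + \cdots + x_{k-1} = x_k$, whose solutions are taken in positive integers. For positive integers $k, r$ with $r \mid k$, $S_{\mathfrak{z},2}(k;r)$ is defined as the least positive integer $t$ such that for every 2-coloring $\chi : \{1, 2, \ldots, t\} \to \{0,1\}$ there exists a solution $(\hat{x}_1, \ldots, \hat{x}_k)$ of $\mathcal{E}$ with all $\hat{x}_i \in \{1, \ldots, t\}$ satisfying $\sum_{i=1}^k \chi(\hat{x}_i) \equiv 0 \pmod r$. *)

From mathcomp Require Import all_boot.
Set Implicit Arguments. Unset Strict Implicit. Unset Printing Implicit Defensive.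

(* A solution of E : x_1 + ... + x_{k-1} = x_k in positive integers, all in
   {1,..,t}.  Indices are shifted: x 0, ..., x (k-1) stand for x_1..x_k. *)
Definition sol_in (k t : nat) (x : nat -> nat) : Prop :=
  (forall i, i < k -> 1 <= x i <= t) /\
  \sum_(i < k.-1) x i = x k.-1.

(* Every 2-colouring of {1,..,t} admits a solution whose colour sum is
   divisible by r.  (Colourings are given as nat -> bool; only values on
   {1,..,t} matter.) *)
Definition zs_prop (k r t : nat) : Prop :=
  forall chi : nat -> bool,
    exists x : nat -> nat, sol_in k t x /\ r %| \sum_(i < k) (chi (x i) : nat).

Definition is_S_z2 (k r s : nat) : Prop :=
  0 < s /\ zs_prop k r s /\ (forall t, 0 < t -> zs_prop k r t -> s <= t).

From mathcomp Require Import all_boot zify.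

(* Lower bound: colour v by [v <= k-2].  If a of the summands x_1..x_(k-1) of a
   solution exceed k-2, then x_k >= (k-1) + a(k-2) also does, so the colour sum
   is k-1-a; as r | k this forces r | a+1, hence x_k >= (k-1) + (r-1)(k-2),
   which is rk-2r+1.
   Upper bound: exchanging the two colours turns a colour sum c into k-c, so we
   may assume that 1 has colour 1.  A solution is determined by its summands,
   and a case analysis on the colours of 2, 3, k-1, k+r-2, k+r-1 (and of a
   colour change z-1 -> z below k) produces summands, mostly 1s, 2s and 3s,
   with colour sum k or k-r. *)

Set Implicit Arguments.
Unset Strict Implicit.
Unset Printing Implicit Defensive.

Definition zs_witness (k r t : nat) (chi : nat -> bool) (s : seq nat) : bool :=
  [&& size s == k.-1, 0 \notin s, sumn s <= t & r %| count chi s + chi (sumn s)].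

Lemma mem_leq_sumn (s : seq nat) v : v \in s -> v <= sumn s.
Proof. by move=> sv; rewrite sumnE (big_rem v) //= leq_addr. Qed.

Lemma size_leq_sumn (s : seq nat) : 0 \notin s -> size s <= sumn s.
Proof.
move=> s_pos; rewrite sumnE -sum1_size big_seq_cond [leqRHS]big_seq_cond.
by apply: leq_sum => v /andP[sv _]; rewrite lt0n; apply: contraNneq s_pos => <-.
Qed.

Lemma sum_nth_rcons (F : nat -> nat) (s : seq nat) v :
  \sum_(i < size s) F (nth 0 (rcons s v) i) = \sum_(u <- s) F u.
Proof.
rewrite (big_nth 0) big_mkord; apply: eq_bigr => i _.
by rewrite nth_rcons ltn_ord.
Qed.

Lemma zs_witness_sol k r t chi s : 1 < k -> zs_witness k r t chi s ->
  exists x, sol_in k t x /\ r %| \sum_(i < k) chi (x i).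
Proof.
move=> k_gt1 /and4P[/eqP size_s s_pos sum_le dvd_col].
have kE : k = (size s).+1 by rewrite size_s prednK // ltnW.
exists (nth 0 (rcons s (sumn s))); split; [split|].
- move=> i; rewrite kE ltnS nth_rcons leq_eqVlt => /orP[/eqP-> | lt_i].
    rewrite ltnn eqxx sum_le andbT.
    by have := size_leq_sumn s_pos; lia.
  have si : nth 0 s i \in s by exact: mem_nth.
  rewrite lt_i lt0n (leq_trans (mem_leq_sumn si)) // andbT.
  by apply: contraNneq s_pos => <-.
- by rewrite kE /= (sum_nth_rcons id) nth_rcons ltnn eqxx sumnE.
- rewrite kE big_ord_recr /= (sum_nth_rcons (fun u => nat_of_bool (chi u))).
  by rewrite nth_rcons ltnn eqxx; rewrite -sumn_count sumnE big_map in dvd_col.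
Qed.

Lemma zs_witness_negb k r t chi s : 0 < k -> r %| k ->
  zs_witness k r t (fun v => ~~ chi v) s -> zs_witness k r t chi s.
Proof.
rewrite /zs_witness => k_gt0 r_dvd_k /and4P[/eqP size_s -> -> dvd_neg].
rewrite size_s eqxx /=.
have := count_predC chi s; rewrite size_s => compl.
have kE : k = (count chi s + chi (sumn s)) + (count (predC chi) s + ~~ chi (sumn s)).
  by case: (chi (sumn s)) => /=; lia.
by move: r_dvd_k; rewrite kE dvdn_addl.
Qed.

Lemma zs_bound_eq k r : 0 < r -> 1 < k -> r * k - 2 * r + 1 = k.-1 + k.-2 * r.-1.
Proof. by case: r => // r _; case: k => [|[|k]] // _; rewrite /= !mulnS !mulSn; lia. Qed.

Lemma sum_leq_add_sum_gtn n m (x : nat -> nat) :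
  \sum_(i < n) (x i <= m) + \sum_(i < n) (m < x i) = n.
Proof.
rewrite -big_split /= -[RHS]card_ord -sum1_card.
by apply: eq_bigr => i _; case: leqP.
Qed.

Lemma sum_gtn_count n m (x : nat -> nat) : (forall i, i < n -> 0 < x i) ->
  n + m * \sum_(i < n) (m < x i) <= \sum_(i < n) x i.
Proof.
move=> x_pos; rewrite big_distrr -[n in n + _]card_ord -sum1_card -big_split /=.
apply: leq_sum => i _; have := x_pos i (ltn_ord i).
by case: ltnP => /=; lia.
Qed.

Lemma zs_prop_ge k r t : 1 < k -> r %| k -> zs_prop k r t -> r * k - 2 * r + 1 <= t.
Proof.
case: k => [|n] // n_gt0 r_dvd_k /(_ (fun v => v <= n.-1)) [x [[x_range x_sum] dvd_col]].
have r_gt0 : 0 < r by case: posnP r_dvd_k => // ->; rewrite dvd0n.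
set c := \sum_(i < n) (n.-1 < x i).
have last_ge : n + n.-1 * c <= x n.
  by rewrite -x_sum; apply: sum_gtn_count => i lt_i; case/andP: (x_range i ltac:(lia)).
have last_le : x n <= t by case/andP: (x_range n ltac:(lia)).
have col_sum : \sum_(i < n.+1) (x i <= n.-1) = n - c.
  rewrite big_ord_recr /=.
  have -> : (x n <= n.-1) = false.
    by have := leq_trans (leq_addr _ _) last_ge; case: leqP => //; lia.
  by rewrite addn0 -[X in X - c](sum_leq_add_sum_gtn n n.-1 x) addnK.
have c_le : c <= n by rewrite -(sum_leq_add_sum_gtn n n.-1 x) leq_addl.
have : r %| c.+1.
  by move: r_dvd_k; rewrite -(subnK c_le) -addnS dvdn_addr // -col_sum.
move=> /(dvdn_leq (ltn0Sn c)) r_le; rewrite zs_bound_eq //.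
apply: leq_trans last_le; apply: leq_trans last_ge.
by rewrite leq_add2l leq_mul2l -ltnS prednK // r_le orbT.
Qed.

Lemma exists_colour_drop (p : nat -> bool) a b : p a -> ~~ p b -> a < b ->
  exists2 z, a < z <= b & p z.-1 && ~~ p z.
Proof.
move=> pa npb lt_ab.
have exP : exists n, (a < n) && ~~ p n by exists b; rewrite lt_ab.
case: (ex_minnP exP) => z /andP[lt_az npz] z_min.
exists z; first by rewrite lt_az z_min ?lt_ab.
rewrite npz andbT; case: (ltngtP a z.-1) => [lt_az1 | | <-] //; last by lia.
by apply: contraT => npz1; have := z_min _ (introT andP (conj lt_az1 npz1)); lia.
Qed.

Lemma zs_witness_ones k r t (chi : nat -> bool) :
  chi 1 -> k.-1 <= t -> r %| k.-1 + chi k.-1 -> zs_witness k r t chi (nseq k.-1 1).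
Proof.
move=> chi1 le_t dvd_col; rewrite /zs_witness size_nseq mem_nseq sumn_nseq count_nseq.
by rewrite chi1 !mul1n eqxx le_t andbF.
Qed.

Section UpperBound.

Variables (k r : nat) (chi : nat -> bool).
Hypotheses (r_gt1 : 1 < r) (r_dvd_k : r %| k) (r_lt_k : r < k) (chi1 : chi 1).

Local Notation N := (r * k - 2 * r + 1).

Let k_ge_2r : 2 * r <= k.
Proof. by case/dvdnP: r_dvd_k r_lt_k => q ->; case: q => [|[|q]] //; rewrite !mulSn; lia. Qed.

Let N_eq : N = k.-1 + k.-2 * r.-1.
Proof. by rewrite zs_bound_eq //; lia. Qed.

Let N_ge a b : a <= k.-2 -> b <= r.-1 -> k.-1 + a * b <= N.
Proof. by move=> le_a le_b; rewrite N_eq leq_add2l leq_mul. Qed.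

Let le_kr_N : k + r - 1 <= N.
Proof. by have := N_ge (a := 2) (b := r.-1) ltac:(lia) (leqnn _); lia. Qed.

Let dvd_k_sub_r : r %| k - r.
Proof. by rewrite dvdn_sub. Qed.

Lemma witness_of_sum L c s : size s = k.-1 -> 0 \notin s -> sumn s = L -> L <= N ->
  count chi s + chi L = c -> r %| c -> zs_witness k r N chi s.
Proof.
move=> size_s s_pos sum_s le_N col_s dvd_c.
by rewrite /zs_witness size_s eqxx s_pos sum_s le_N col_s dvd_c.
Qed.

Ltac witness_arith :=
  rewrite ?size_cat ?size_nseq ?mem_cat ?mem_seq1 ?mem_nseq ?sumn_cat ?sumn_nseq
          ?count_cat ?count_nseq /=.

Lemma witness_colour_drop z : chi 2 -> 2 < z < k -> chi z.-1 -> ~~ chi z ->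
  exists s, zs_witness k r N chi s.
Proof.
move=> chi2 z_bnd chi_z1 /negbTE chi_z.
set L := k.-1 + r.-1 * z.-1.
have L_le : L <= N by rewrite /L mulnC N_ge //; lia.
(* r-1 copies of z-1 and of 2 have the same sum as r-1 copies of z and of 1. *)
case chi_L : (chi L).
- exists (nseq r.-1 z.-1 ++ nseq r.-1 2 ++ nseq (k - 2 * r + 1) 1).
  apply: (witness_of_sum (L := L) (c := k)) => //; witness_arith;
    rewrite ?chi_z1 ?chi2 ?chi1 ?chi_L /=; lia.
- exists (nseq r.-1 z ++ nseq (k - r) 1).
  apply: (witness_of_sum (L := L) (c := k - r)) => //; witness_arith;
    rewrite ?chi_z ?chi1 ?chi_L /=; lia.
Qed.

Lemma witness_twos_rpred : ~~ chi 2 -> ~~ chi (k + r - 2) ->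
  exists s, zs_witness k r N chi s.
Proof.
move=> /negbTE chi2 /negbTE chi_L; exists (nseq r.-1 2 ++ nseq (k - r) 1).
apply: (witness_of_sum (L := k + r - 2) (c := k - r)) => //; witness_arith;
  rewrite ?chi2 ?chi1 ?chi_L /=; lia.
Qed.

Lemma witness_twos_r : ~~ chi 2 -> chi (k + r - 1) -> exists s, zs_witness k r N chi s.
Proof.
move=> /negbTE chi2 chi_L; exists (nseq r 2 ++ nseq (k - r).-1 1).
apply: (witness_of_sum (L := k + r - 1) (c := k - r)) => //; witness_arith;
  rewrite ?chi2 ?chi1 ?chi_L /=; lia.
Qed.

Lemma witness_twos_three : ~~ chi 2 -> ~~ chi 3 -> ~~ chi (k + r - 1) ->
  exists s, zs_witness k r N chi s.
Proof.
move=> /negbTE chi2 /negbTE chi3 /negbTE chi_L.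
exists (nseq (r - 2) 2 ++ [:: 3] ++ nseq (k - r) 1).
apply: (witness_of_sum (L := k + r - 1) (c := k - r)) => //; witness_arith;
  rewrite ?chi2 ?chi3 ?chi1 ?chi_L /=; lia.
Qed.

Lemma witness_threes_odd : odd r -> chi 3 -> chi (k + r - 2) ->
  exists s, zs_witness k r N chi s.
Proof.
move=> odd_r chi3 chi_L; exists (nseq r./2 3 ++ nseq (k.-1 - r./2) 1).
have := odd_double_half r; rewrite odd_r -muln2 => r_half.
apply: (witness_of_sum (L := k + r - 2) (c := k)) => //; witness_arith;
  rewrite ?chi3 ?chi1 ?chi_L /=; lia.
Qed.

Lemma witness_r2 : r = 2 -> chi 3 -> ~~ chi k.-1 -> exists s, zs_witness k r N chi s.
Proof.
move=> r2 chi3 /negbTE chi_k1.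
have [h kE] : exists h, k = h * 2 by apply/dvdnP; rewrite -r2.
have N2 : N = 2 * k - 3 by rewrite r2; lia.
case chi_L : (chi (2 * k - 3)).
- exists (nseq h.-1 3 ++ nseq h 1).
  apply: (witness_of_sum (L := 2 * k - 3) (c := k)); rewrite ?N2 => //; witness_arith;
    rewrite ?chi3 ?chi1 ?chi_L /=; lia.
- exists ([:: k.-1] ++ nseq (k - 2) 1).
  apply: (witness_of_sum (L := 2 * k - 3) (c := k - r)); rewrite ?N2 => //; witness_arith;
    rewrite ?chi_k1 ?chi1 ?chi_L /=; lia.
Qed.

Lemma witness_even : ~~ odd r -> 2 < r -> ~~ chi 2 -> chi 3 -> chi (k + r - 2) ->
  exists s, zs_witness k r N chi s.
Proof.
move=> even_r r_gt2 /negbTE chi2 chi3 chi_L1.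
have [h kE] : exists h, k = h * 2.
  by apply/dvdnP; apply: dvdn_trans r_dvd_k; rewrite dvdn2.
have := odd_double_half r; rewrite (negbTE even_r) -muln2 => r_half.
have N_ge3 := N_ge (a := k.-2) (b := 3) (leqnn _) ltac:(lia).
case chi_L : (chi (2 * k + 2 * r - 5)).
- exists (nseq (h + r - 2) 3 ++ nseq (k.-1 - (h + r - 2)) 1).
  apply: (witness_of_sum (L := 2 * k + 2 * r - 5) (c := k)) => //; witness_arith;
    rewrite ?chi3 ?chi1 ?chi_L /=; lia.
- exists (nseq r.-1 2 ++ [:: k + r - 2] ++ nseq (k - r).-1 1).
  apply: (witness_of_sum (L := 2 * k + 2 * r - 5) (c := k - r)) => //; witness_arith;
    rewrite ?chi2 ?chi_L1 ?chi1 ?chi_L /=; lia.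
Qed.

Lemma witness_exists : exists s, zs_witness k r N chi s.
Proof.
case chi_k1 : (chi k.-1).
  exists (nseq k.-1 1); apply: zs_witness_ones => //; first by rewrite N_eq leq_addr.
  by rewrite chi_k1 addn1 prednK //; lia.
case chi2 : (chi 2).
  have lt_2k : 2 < k.-1 by lia.
  have [z z_bnd /andP[chi_z1 chi_z]] := exists_colour_drop chi2 (negbT chi_k1) lt_2k.
  apply: (witness_colour_drop chi2 _ chi_z1 chi_z); lia.
case chi_L1 : (chi (k + r - 2)); last exact: witness_twos_rpred (negbT chi2) (negbT chi_L1).
case chi_L2 : (chi (k + r - 1)); first exact: witness_twos_r (negbT chi2) chi_L2.
case chi3 : (chi 3); last exact: witness_twos_three (negbT chi2) (negbT chi3) (negbT chi_L2).
have [odd_r | even_r] := boolP (odd r); first exact: witness_threes_odd odd_r chi3 chi_L1.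
have [r_gt2 | r2] : 2 < r \/ r = 2 by lia.
- exact: witness_even even_r r_gt2 (negbT chi2) chi3 chi_L1.
- exact: witness_r2 r2 chi3 (negbT chi_k1).
Qed.

End UpperBound.

Lemma zs_witness_exists k r (chi : nat -> bool) : 0 < r -> r %| k -> r < k ->
  exists s, zs_witness k r (r * k - 2 * r + 1) chi s.
Proof.
move=> r_gt0 r_dvd_k r_lt_k.
wlog chi1 : chi / chi 1.
  move=> chi1_wlog; case chi1 : (chi 1); first exact: chi1_wlog.
  have [s ws] := chi1_wlog (fun v => ~~ chi v) (negbT chi1).
  by exists s; apply: zs_witness_negb ws; lia.
case: (ltnP 1 r) => [r_gt1 | r_le1]; first exact: witness_exists.
have -> : r = 1 by lia.
by exists (nseq k.-1 1); apply: zs_witness_ones => //; lia.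
Qed.

Theorem theorem3 (k r : nat) (hk : 0 < k) (hr : 0 < r) (hrk : r %| k) (hlt : r < k) :
  is_S_z2 k r (r * k - 2 * r + 1).
Proof.
split; first by rewrite addn1.
split=> [chi | t _]; last by apply: zs_prop_ge; lia.
have [s ws] := zs_witness_exists chi hr hrk hlt.
by apply: zs_witness_sol ws; lia.
Qed.
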